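(* Let $X \subseteq \mathbb{Z}^n$ be a closed set, $c \in \mathbb{R}^n$, $Q$ an $n\times n$ symmetric positive semidefinite matrix, and $\Omega > 0$. Define $h:\mathbb{R}^n \times \mathbb{R}_+ \to \mathbb{R}\cup\{+\infty\}$ by $h(x,t) = \frac{x'Qx}{t}$ if $t>0$; $h(x,0) = 0$ if $x'Qx = 0$; and $h(x,0) = +\infty$ otherwise. Let $f(t) = \min_{x \in X}\{ c'x + \frac{\Omega}{2}h(x,t) + \frac{\Omega}{2}t\}$ for $t \ge 0$. Then the mean-risk problem and the perspective reformulation are equivalent, i.e., $$\min\left\{c'x + \Omega\sqrt{x'Qx} : x \in X\right\} = \min\{f(t) : t \ge 0\}.$$
   Context: $h$ is the closure of the perspective function of the convex quadratic $q(x)=x'Qx$. The minima appearing (in the definition of $f$ and in both sides of the equality) are assumed to be attained. *)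

From HB Require Import structures.
From mathcomp Require Import all_boot all_order all_algebra.
From mathcomp Require Import all_classical all_reals all_analysis.
Set Implicit Arguments. Unset Strict Implicit. Unset Printing Implicit Defensive.
Import Order.TTheory GRing.Theory Num.Theory.
Import numFieldNormedType.Exports.
Local Open Scope classical_set_scope.
Local Open Scope ring_scope.

Definition qform (R : realType) (n : nat) (Q : 'M[R]_n) (x : 'cV[R]_n) : R :=
  (x^T *m Q *m x) 0 0.

Definition lin (R : realType) (n : nat) (c x : 'cV[R]_n) : R := (c^T *m x) 0 0.

(* h = closure of the perspective of q; only used for t >= 0 *)
Definition persp (R : realType) (n : nat) (Q : 'M[R]_n) (x : 'cV[R]_n) (t : R)
  : \bar R :=
  if 0 < t then (qform Q x / t)%:E
  else if qform Q x == 0 then 0%E else +oo%E.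

Definition persp_obj (R : realType) (n : nat) (Q : 'M[R]_n) (c : 'cV[R]_n)
  (Om : R) (x : 'cV[R]_n) (t : R) : \bar R :=
  ((lin c x)%:E + (Om / 2)%:E * persp Q x t + (Om / 2 * t)%:E)%E.

(* f(t) = min_{x in X} persp_obj x t  (as an infimum; attainment is a hypothesis) *)
Definition fval (R : realType) (n : nat) (X : set 'cV[R]_n) (Q : 'M[R]_n)
  (c : 'cV[R]_n) (Om : R) (t : R) : \bar R :=
  ereal_inf [set persp_obj Q c Om x t | x in X].

Definition mr_obj (R : realType) (n : nat) (Q : 'M[R]_n) (c : 'cV[R]_n) (Om : R)
  (x : 'cV[R]_n) : R := lin c x + Om * Num.sqrt (qform Q x).

From HB Require Import structures.
From mathcomp Require Import all_boot all_order all_algebra.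
From mathcomp Require Import all_classical all_reals all_analysis.
From mathcomp Require Import lra.
Set Implicit Arguments. Unset Strict Implicit. Unset Printing Implicit Defensive.
Import Order.TTheory GRing.Theory Num.Theory.
Import numFieldNormedType.Exports.
Local Open Scope classical_set_scope.
Local Open Scope ring_scope.

(* For fixed x, the perspective objective dominates the mean-risk objective for
   every t >= 0: by AM-GM, 2 sqrt(q) <= q/t + t when t > 0, while at t = 0 the
   closed perspective is +oo unless q = 0.  Equality holds at t = sqrt(q).
   Hence the mean-risk objective is the minimum over t of the perspective
   objective, and the theorem is an exchange of two infima; it holds for any
   set X, with no need for integrality, closedness or attainment. *)

Lemma two_sqrt_le_divD (R : rcfType) (q t : R) :
  0 <= q -> 0 < t -> 2 * Num.sqrt q <= q / t + t.
Proof.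
move=> q_ge0 t_gt0; rewrite -(ler_pM2r t_gt0) [leRHS]mulrDl divfK ?gt_eqF //.
have sq_sqrt : Num.sqrt q ^+ 2 = q by rewrite sqr_sqrtr.
have := sqr_ge0 (Num.sqrt q - t); nra.
Qed.

Lemma sqrt_divD (R : rcfType) (q : R) :
  0 < q -> q / Num.sqrt q + Num.sqrt q = 2 * Num.sqrt q.
Proof.
move=> q_gt0; have sqrt_gt0 : 0 < Num.sqrt q by rewrite sqrtr_gt0.
rewrite -{1}(sqr_sqrtr (ltW q_gt0)) expr2 mulfK ?gt_eqF //; lra.
Qed.

Lemma ereal_inf_inf_tight (R : realType) (A B : Type) (X : set A) (T : set B)
    (g : A -> \bar R) (F : A -> B -> \bar R) :
  (forall a b, X a -> T b -> (g a <= F a b)%E) ->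
  (forall a, X a -> exists2 b, T b & F a b = g a) ->
  ereal_inf (g @` X) = ereal_inf [set ereal_inf [set F a b | a in X] | b in T].
Proof.
move=> g_le_F F_tight; apply/eqP; rewrite eq_le; apply/andP; split.
  apply/ereal_infP => _ [b Tb <-]; apply/ereal_infP => _ [a Xa <-].
  by apply: le_trans (g_le_F a b Xa Tb); apply: ereal_inf_lbound; exists a.
apply/ereal_infP => _ [a Xa <-]; have [b Tb <-] := F_tight a Xa.
apply: le_trans (ereal_inf_lbound _) _; first by exists b.
by apply: ereal_inf_lbound; exists a.
Qed.

Section PerspectiveObjective.
Variables (R : realType) (n : nat) (Q : 'M[R]_n) (c : 'cV[R]_n) (Om : R).
Hypothesis Om_gt0 : 0 < Om.

Lemma mr_obj_le_persp_obj (x : 'cV[R]_n) (t : R) :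
  0 <= qform Q x -> 0 <= t -> ((mr_obj Q c Om x)%:E <= persp_obj Q c Om x t)%E.
Proof.
rewrite /persp_obj /persp /mr_obj => q_ge0 t_ge0; case: ifPn => [t_gt0|].
  rewrite -!EFinM -!EFinD lee_fin -addrA lerD2l -mulrDr.
  have := two_sqrt_le_divD q_ge0 t_gt0.
  by rewrite -(@ler_pM2l _ (Om / 2)) ?divr_gt0 // mulrA divfK ?pnatr_eq0.
rewrite -leNgt => t_le0; have -> : t = 0 by apply/le_anti/andP.
case: ifPn => [/eqP ->|q_neq0].
  by rewrite sqrtr0 !mulr0 mule0 !adde0 addr0.
by rewrite gt0_muley ?lte_fin ?divr_gt0 // addey ?leey.
Qed.

Lemma persp_obj_sqrt (x : 'cV[R]_n) :
  0 <= qform Q x -> persp_obj Q c Om x (Num.sqrt (qform Q x)) = (mr_obj Q c Om x)%:E.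
Proof.
rewrite /persp_obj /persp /mr_obj sqrtr_gt0 => q_ge0; case: ifPn => [q_gt0|].
  rewrite -!EFinM -!EFinD -addrA -mulrDr sqrt_divD //.
  by rewrite mulrAC (mulrC 2) mulrA mulfK ?pnatr_eq0.
rewrite -leNgt => q_le0; have -> : qform Q x = 0 by apply/le_anti/andP.
by rewrite eqxx sqrtr0 !mulr0 mule0 !adde0 addr0.
Qed.

End PerspectiveObjective.

Theorem proposition3 (R : realType) (n : nat) (X : set 'cV[R]_n)
  (c : 'cV[R]_n) (Q : 'M[R]_n) (Om : R) :
  (forall x, X x -> forall i, x i 0 \is a Num.int) ->
  closed X ->
  Q^T = Q ->
  (forall x : 'cV[R]_n, 0 <= qform Q x) ->
  0 < Om ->
  (* the minima are attained *)
  (exists2 x0, X x0 &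
     (mr_obj Q c Om x0)%:E = ereal_inf [set (mr_obj Q c Om x)%:E | x in X]) ->
  (forall t, 0 <= t -> exists2 x0, X x0 & persp_obj Q c Om x0 t = fval X Q c Om t) ->
  (exists2 t0, 0 <= t0 &
     fval X Q c Om t0 = ereal_inf [set fval X Q c Om t | t in [set t | 0 <= t]]) ->
  ereal_inf [set (mr_obj Q c Om x)%:E | x in X] =
  ereal_inf [set fval X Q c Om t | t in [set t | 0 <= t]].
Proof.
move=> _ _ _ q_ge0 Om_gt0 _ _ _.
apply: ereal_inf_inf_tight => [x t _ /= t_ge0|x _].
  exact: mr_obj_le_persp_obj.
exists (Num.sqrt (qform Q x)); first by rewrite /= sqrtr_ge0.
exact: persp_obj_sqrt.
Qed.
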